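(* Let $\mathcal{S}=\langle\mathcal{L},\vdash\rangle$ be a logical structure with $\mathcal{L}$ infinite, and let $\varrho\subseteq\mathcal{P}(\mathcal{L})\times\mathcal{L}$ have finite reach. Then the principles gECQ and spECQ both fail in $\langle\mathcal{L},\vdash^\varrho\rangle$ and in $\langle\mathcal{L},\vdash^{p\varrho}\rangle$.
   Context: A logical structure is a pair $\langle\mathcal{L},\vdash\rangle$ with $\mathcal{L}$ a set and $\vdash\subseteq\mathcal{P}(\mathcal{L})\times\mathcal{L}$ arbitrary. For $\varrho\subseteq\mathcal{P}(\mathcal{L})\times\mathcal{L}$: $\Gamma\vdash^\varrho\alpha$ iff there is $\Delta\subseteq\Gamma$ with $(\Delta,\alpha)\in\varrho$ and $\Delta\vdash\alpha$; $\Gamma\vdash^{p\varrho}\alpha$ iff there is a nonempty $\Delta\subseteq\Gamma$ with $(\Delta,\alpha)\in\varrho$ and $\Delta\vdash\alpha$. $\varrho$ has finite reach if for every $\Delta\subseteq\mathcal{L}$ the set $\{\alpha\mid(\Delta,\alpha)\in\varrho\}$ is finite. For a logical structure $\langle\mathcal{L},\vdash'\rangle$: gECQ holds if for every $\alpha\in\mathcal{L}$ there is $\beta\in\mathcal{L}$ such that $\{\alpha,\beta\}\vdash'\gamma$ for all $\gamma\in\mathcal{L}$; spECQ holds if for every $\Gamma\subsetneq\mathcal{L}$ there is $\alpha\in\mathcal{L}$ such that $\Gamma\cup\{\alpha\}\subsetneq\mathcal{L}$ and $\Gamma\cup\{\alpha\}\vdash'\beta$ for all $\beta\in\mathcal{L}$.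 *)

From Stdlib Require Import List.

Definition subset {L : Type} (A B : L -> Prop) : Prop := forall x, A x -> B x.

Definition finite_set {L : Type} (A : L -> Prop) : Prop :=
  exists l : list L, forall x, A x -> In x l.

Definition infinite_type (L : Type) : Prop := ~ finite_set (fun _ : L => True).

Definition cons_rel (L : Type) := (L -> Prop) -> L -> Prop.

Definition restr {L : Type} (rho : cons_rel L) (vd : cons_rel L) : cons_rel L :=
  fun Gamma alpha => exists Delta, subset Delta Gamma /\ rho Delta alpha /\ vd Delta alpha.

Definition prestr {L : Type} (rho : cons_rel L) (vd : cons_rel L) : cons_rel L :=
  fun Gamma alpha => exists Delta, (exists d, Delta d) /\ subset Delta Gamma
                                   /\ rho Delta alpha /\ vd Delta alpha.

Definition finite_reach {L : Type} (rho : cons_rel L) : Prop :=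
  forall Delta : L -> Prop, finite_set (fun alpha => rho Delta alpha).

Definition pair_set {L : Type} (a b : L) : L -> Prop := fun x => x = a \/ x = b.
Definition add_elt {L : Type} (G : L -> Prop) (a : L) : L -> Prop := fun x => G x \/ x = a.

Definition proper_full {L : Type} (G : L -> Prop) : Prop := exists b, ~ G b.

Definition gECQ {L : Type} (vd : cons_rel L) : Prop :=
  forall alpha, exists beta, forall gamma, vd (pair_set alpha beta) gamma.

Definition spECQ {L : Type} (vd : cons_rel L) : Prop :=
  forall Gamma : L -> Prop, proper_full Gamma ->
    exists alpha, proper_full (add_elt Gamma alpha) /\
                  forall beta, vd (add_elt Gamma alpha) beta.

From Stdlib Require Import List Classical FunctionalExtensionality PropExtensionality.

(* A finite premise set has finitely many subsets, each of which has a finite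
   ρ-reach, so only finitely many formulas follow from it under ⊢^ρ, and a
   fortiori under ⊢^{pρ}.  As L is infinite, no finite premise set explodes;
   but gECQ asks the pair {α, β} to explode, and spECQ applied to Γ = ∅ asks a
   singleton {α} to explode. *)

Lemma finite_set_subset {T : Type} (A B : T -> Prop) :
  subset A B -> finite_set B -> finite_set A.
Proof. intros HAB [l Hl]. exists l. intros x Hx. apply Hl, HAB, Hx. Qed.

Lemma finite_set_empty {T : Type} : finite_set (fun _ : T => False).
Proof. exists nil. tauto. Qed.

Lemma finite_set_union_family {T U : Type} (Ds : list U) (F : U -> T -> Prop) :
  (forall D, In D Ds -> finite_set (F D)) ->
  finite_set (fun x => exists D, In D Ds /\ F D x).
Proof.
  induction Ds as [|D Ds IH]; intros HF.
  - exists nil. intros x [D [[] _]].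
  - destruct (HF D (or_introl eq_refl)) as [l Hl].
    destruct IH as [ls Hls]; [intros D' HD'; apply HF; right; exact HD'|].
    exists (l ++ ls). intros x [D' [[<- | HD'] HFx]]; apply in_or_app.
    + left. apply Hl, HFx.
    + right. apply Hls. eauto.
Qed.

Lemma infinite_type_not_finite_set {L : Type} (A : L -> Prop) :
  infinite_type L -> finite_set A -> exists x, ~ A x.
Proof.
  intros Hinf HA. apply not_all_ex_not. intros Hall.
  apply Hinf, finite_set_subset with A; [intros x _; apply Hall | exact HA].
Qed.

Lemma add_elt_remove {L : Type} (Delta : L -> Prop) (a : L) :
  Delta a -> Delta = add_elt (fun x => Delta x /\ x <> a) a.
Proof.
  intros Ha. extensionality x. apply propositional_extensionality.
  unfold add_elt. destruct (classic (x = a)) as [->|Hxa]; tauto.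
Qed.

Lemma remove_notin {L : Type} (Delta : L -> Prop) (a : L) :
  ~ Delta a -> Delta = (fun x => Delta x /\ x <> a).
Proof.
  intros Ha. extensionality x. apply propositional_extensionality.
  destruct (classic (x = a)) as [->|Hxa]; tauto.
Qed.

(* Subsets are listed up to Leibniz equality, as [rho] need not respect
   extensional equality of premise sets. *)
Lemma finite_powerset {L : Type} (A : L -> Prop) :
  finite_set A -> finite_set (fun Delta => subset Delta A).
Proof.
  intros [l Hl].
  apply finite_set_subset with (B := fun Delta => subset Delta (fun x => In x l)).
  { intros Delta HD x Hx. apply Hl, HD, Hx. }
  clear. induction l as [|a l [Ds HDs]].
  - exists ((fun _ => False) :: nil). intros Delta HD. left.
    extensionality x. apply propositional_extensionality.
    split; [tauto | exact (HD x)].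
  - exists (Ds ++ map (fun D => add_elt D a) Ds). intros Delta HD.
    assert (HDa : In (fun x => Delta x /\ x <> a) Ds).
    { apply HDs. intros x [Hx Hxa]. destruct (HD x Hx) as [Hax|Hin];
        [congruence | exact Hin]. }
    apply in_or_app. destruct (classic (Delta a)) as [Ha|Ha].
    + right. rewrite (add_elt_remove Delta a Ha). apply (in_map (fun D => add_elt D a)), HDa.
    + left. rewrite (remove_notin Delta a Ha). exact HDa.
Qed.

Lemma finite_reach_consequences {L : Type} (rho : cons_rel L) (Gamma : L -> Prop) :
  finite_reach rho -> finite_set Gamma ->
  finite_set (fun g => exists Delta, subset Delta Gamma /\ rho Delta g).
Proof.
  intros Hrho HG. destruct (finite_powerset Gamma HG) as [Ds HDs].
  apply finite_set_subset with (B := fun g => exists D, In D Ds /\ rho D g).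
  - intros g [D [HD Hr]]. eauto.
  - apply finite_set_union_family. intros D _. apply Hrho.
Qed.

Definition finitely_non_explosive {L : Type} (vd : cons_rel L) : Prop :=
  forall Gamma, finite_set Gamma -> exists g, ~ vd Gamma g.

Lemma finitely_non_explosive_sub {L : Type} (vd vd' : cons_rel L) :
  (forall Gamma a, vd' Gamma a -> vd Gamma a) ->
  finitely_non_explosive vd -> finitely_non_explosive vd'.
Proof.
  intros Hsub Hvd Gamma HG. destruct (Hvd Gamma HG) as [g Hg].
  exists g. intros Hg'. apply Hg, Hsub, Hg'.
Qed.

Lemma prestr_restr {L : Type} (rho vd : cons_rel L) Gamma a :
  prestr rho vd Gamma a -> restr rho vd Gamma a.
Proof. intros [Delta [_ HD]]. exists Delta. exact HD. Qed.

Lemma restr_finitely_non_explosive {L : Type} (rho vd : cons_rel L) :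
  infinite_type L -> finite_reach rho -> finitely_non_explosive (restr rho vd).
Proof.
  intros Hinf Hrho Gamma HG.
  destruct (infinite_type_not_finite_set _ Hinf
              (finite_reach_consequences rho Gamma Hrho HG)) as [g Hg].
  exists g. intros [Delta [HD [Hr _]]]. apply Hg. eauto.
Qed.

Lemma finitely_non_explosive_not_gECQ {L : Type} (vd : cons_rel L) :
  finitely_non_explosive vd -> ~ gECQ vd.
Proof.
  intros Hvd Hg. destruct (Hvd _ finite_set_empty) as [a _].
  destruct (Hg a) as [b Hb].
  destruct (Hvd (pair_set a b)) as [g Hng].
  - exists (a :: b :: nil). intros x [-> | ->]; simpl; auto.
  - exact (Hng (Hb g)).
Qed.

Lemma finitely_non_explosive_not_spECQ {L : Type} (vd : cons_rel L) :
  finitely_non_explosive vd -> ~ spECQ vd.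
Proof.
  intros Hvd Hs. destruct (Hvd _ finite_set_empty) as [a _].
  destruct (Hs (fun _ => False)) as [b [_ Hb]]; [exists a; tauto|].
  destruct (Hvd (add_elt (fun _ => False) b)) as [g Hng].
  - exists (b :: nil). intros x [[] | ->]. left; reflexivity.
  - exact (Hng (Hb g)).
Qed.

Theorem corollary3p19 (L : Type) (vd : cons_rel L) (rho : cons_rel L) :
  infinite_type L -> finite_reach rho ->
  ~ gECQ (restr rho vd) /\ ~ spECQ (restr rho vd) /\
  ~ gECQ (prestr rho vd) /\ ~ spECQ (prestr rho vd).
Proof.
  intros Hinf Hrho.
  assert (Hr := restr_finitely_non_explosive rho vd Hinf Hrho).
  assert (Hp : finitely_non_explosive (prestr rho vd))
    by exact (finitely_non_explosive_sub _ _ (prestr_restr rho vd) Hr).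
  repeat split; auto using finitely_non_explosive_not_gECQ,
                          finitely_non_explosive_not_spECQ.
Qed.
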